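(* Let $\mathbf K$ be an M$\Delta$C. Consider the conditions: (a) there exist two proper coprime complementary thick ideals of $\mathbf K$; (b) there exist two proper coprime complementary principal ideals of $\mathbf K$; (c) $\operatorname{Spc}\mathbf K$ is disconnected, i.e. there exist proper disjoint closed subsets $Z_1,Z_2$ with $\operatorname{Spc}\mathbf K=Z_1\sqcup Z_2$. Then (a) $\Leftrightarrow$ (b), and these imply (c). If moreover either (i) $\mathbf K$ is generated by a single object $G$ as a thick (triangulated) subcategory, or (ii) $\operatorname{Spc}\mathbf K$ is a Noetherian topological space, then (a), (b), (c) are all equivalent.
   Context: M$\Delta$C: triangulated category with monoidal structure $(\otimes,\mathbf 1)$, $\otimes$ exact in each variable. Thick ideal: full triangulated subcategory closed under direct summands and two-sided tensoring with arbitrary objects; $\langle\mathcal S\rangle$ the smallest thick ideal containing $\mathcal S$; principal ideal: $\langle A\rangle$. $\mathbf I,\mathbf J$ coprime if $\langle\mathbf I\cup\mathbf J\rangle=\mathbf K$. Prime ideal: proper thick ideal $\mathbf P$ such that $\mathbf I\otimes\mathbf J\subseteq\mathbf P$ for thick ideals $\mathbf I,\mathbf J$ implies $\mathbf I\subseteq\mathbf P$ or $\mathbf J\subseteq\mathbf P$. The prime radical of $\mathbf K$ is the intersection of all prime ideals. Two thick ideals are complementary if their intersection is contained in the prime radical. $\operatorname{Spc}\mathbf K$: set of prime ideals with closed sets generated (by intersections) from $V(A)=\{\mathbf P:A\notin\mathbf P\}$. *)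

From HB Require Import structures.
From mathcomp Require Import all_boot all_algebra.
Set Implicit Arguments. Unset Strict Implicit. Unset Printing Implicit Defensive.
Import GRing.Theory.
Local Open Scope ring_scope.

Record PreaddCat := {
  obj :> Type;
  hom : obj -> obj -> zmodType;
  idm : forall X, hom X X;
  comp : forall {X Y Z}, hom Y Z -> hom X Y -> hom X Z;
  compA : forall X Y Z W (h : hom Z W) (g : hom Y Z) (f : hom X Y),
      comp h (comp g f) = comp (comp h g) f;
  comp1m : forall X Y (f : hom X Y), comp (idm Y) f = f;
  compm1 : forall X Y (f : hom X Y), comp f (idm X) = f;
  compDl : forall X Y Z (g g' : hom Y Z) (f : hom X Y),
      comp (g + g') f = comp g f + comp g' f;
  compDr : forall X Y Z (g : hom Y Z) (f f' : hom X Y),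
      comp g (f + f') = comp g f + comp g f'
}.
Arguments idm {p} X.
Arguments comp {p X Y Z}.
Arguments hom {p}.

Section PreaddDefs.
Variable C : PreaddCat.

Definition isIso (X Y : C) (f : hom X Y) : Prop :=
  exists g : hom Y X, comp g f = idm X /\ comp f g = idm Y.

Definition isomorphic (X Y : C) : Prop := exists f : hom X Y, isIso f.

Definition is_zero_obj (Z : C) : Prop :=
  (forall X (f : hom Z X), f = 0) /\ (forall X (f : hom X Z), f = 0).

Definition is_biprod (X Y S : C) (i1 : hom X S) (i2 : hom Y S)
    (p1 : hom S X) (p2 : hom S Y) : Prop :=
  [/\ comp p1 i1 = idm X, comp p2 i2 = idm Y, comp p2 i1 = 0, comp p1 i2 = 0
    & comp i1 p1 + comp i2 p2 = idm S].

Definition is_summand (X S : C) : Prop :=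
  exists (Y : C) (i1 : hom X S) (i2 : hom Y S) (p1 : hom S X) (p2 : hom S Y),
    is_biprod i1 i2 p1 p2.
End PreaddDefs.

Record TriCat := {
  tc :> PreaddCat;
  tc_zero : exists Z : tc, is_zero_obj Z;
  tc_biprod : forall X Y : tc, exists (S : tc) (i1 : hom X S) (i2 : hom Y S)
      (p1 : hom S X) (p2 : hom S Y), is_biprod i1 i2 p1 p2;
  sh : tc -> tc;
  shm : forall {X Y : tc}, hom X Y -> hom (sh X) (sh Y);
  shm_id : forall X, shm (idm X) = idm (sh X);
  shm_comp : forall X Y Z (g : hom Y Z) (f : hom X Y),
      shm (comp g f) = comp (shm g) (shm f);
  shm_add : forall X Y (f f' : hom X Y), shm (f + f') = shm f + shm f';
  shm_inj : forall X Y (f f' : hom X Y), shm f = shm f' -> f = f';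
  shm_surj : forall X Y (g : hom (sh X) (sh Y)), exists f : hom X Y, shm f = g;
  sh_esurj : forall Y : tc, exists X : tc, isomorphic (sh X) Y;
  dist : forall {X Y Z : tc}, hom X Y -> hom Y Z -> hom Z (sh X) -> Prop;
  dist_iso : forall X Y Z X' Y' Z' (f : hom X Y) (g : hom Y Z) (h : hom Z (sh X))
      (f' : hom X' Y') (g' : hom Y' Z') (h' : hom Z' (sh X'))
      (a : hom X X') (b : hom Y Y') (c : hom Z Z'),
      isIso a -> isIso b -> isIso c ->
      comp b f = comp f' a -> comp c g = comp g' b -> comp (shm a) h = comp h' c ->
      dist f g h -> dist f' g' h';
  dist_id : forall (X Z : tc), is_zero_obj Z ->
      dist (idm X) (0 : hom X Z) (0 : hom Z (sh X));
  dist_ext : forall X Y (f : hom X Y), exists (Z : tc) (g : hom Y Z) (h : hom Z (sh X)),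
      dist f g h;
  dist_rot : forall X Y Z (f : hom X Y) (g : hom Y Z) (h : hom Z (sh X)),
      dist f g h <-> dist g h (- shm f);
  dist_morph : forall X Y Z X' Y' Z' (f : hom X Y) (g : hom Y Z) (h : hom Z (sh X))
      (f' : hom X' Y') (g' : hom Y' Z') (h' : hom Z' (sh X'))
      (a : hom X X') (b : hom Y Y'),
      dist f g h -> dist f' g' h' -> comp b f = comp f' a ->
      exists c : hom Z Z', comp c g = comp g' b /\ comp (shm a) h = comp h' c;
  dist_oct : forall X Y Z Z' X' Y' (f : hom X Y) (g : hom Y Z)
      (u : hom Y Z') (d : hom Z' (sh X))
      (v : hom Z X') (e : hom X' (sh Y))
      (w : hom Z Y') (r : hom Y' (sh X)),
      dist f u d -> dist g v e -> dist (comp g f) w r ->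
      exists (al : hom Z' Y') (be : hom Y' X'),
        [/\ dist al be (comp (shm u) e),
            comp al u = comp w g, comp r al = d,
            comp be w = v & comp e be = comp (shm f) r]
}.
Arguments sh {t}.
Arguments shm {t X Y}.
Arguments dist {t X Y Z}.

(* Monoidal triangulated categories (MDeltaC): a (not necessarily     *)
(* braided) monoidal structure whose tensor is exact in each variable.*)
Record MDC := {
  mtc :> TriCat;
  tens : mtc -> mtc -> mtc;
  tensm : forall {X X' Y Y' : mtc}, hom X X' -> hom Y Y' -> hom (tens X Y) (tens X' Y');
  tensm_id : forall X Y, tensm (idm X) (idm Y) = idm (tens X Y);
  tensm_comp : forall X X' X'' Y Y' Y'' (f : hom X X') (f' : hom X' X'')
      (g : hom Y Y') (g' : hom Y' Y''),
      tensm (comp f' f) (comp g' g) = comp (tensm f' g') (tensm f g);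
  tensm_addl : forall X X' Y Y' (f f' : hom X X') (g : hom Y Y'),
      tensm (f + f') g = tensm f g + tensm f' g;
  tensm_addr : forall X X' Y Y' (f : hom X X') (g g' : hom Y Y'),
      tensm f (g + g') = tensm f g + tensm f g';
  tunit : mtc;
  assoc : forall X Y Z, hom (tens (tens X Y) Z) (tens X (tens Y Z));
  assoc_iso : forall X Y Z, isIso (assoc X Y Z);
  assoc_nat : forall X X' Y Y' Z Z' (f : hom X X') (g : hom Y Y') (h : hom Z Z'),
      comp (assoc X' Y' Z') (tensm (tensm f g) h)
      = comp (tensm f (tensm g h)) (assoc X Y Z);
  lunit : forall X, hom (tens tunit X) X;
  lunit_iso : forall X, isIso (lunit X);
  lunit_nat : forall X X' (f : hom X X'),
      comp (lunit X') (tensm (idm tunit) f) = comp f (lunit X);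
  runit : forall X, hom (tens X tunit) X;
  runit_iso : forall X, isIso (runit X);
  runit_nat : forall X X' (f : hom X X'),
      comp (runit X') (tensm f (idm tunit)) = comp f (runit X);
  pentagon : forall W X Y Z,
      comp (assoc W X (tens Y Z)) (assoc (tens W X) Y Z)
      = comp (tensm (idm W) (assoc X Y Z))
             (comp (assoc W (tens X Y) Z) (tensm (assoc W X Y) (idm Z)));
  triangle_ax : forall X Y,
      comp (tensm (idm X) (lunit Y)) (assoc X tunit Y) = tensm (runit X) (idm Y);
  thetaL : forall X Y, hom (tens X (sh Y)) (sh (tens X Y));
  thetaL_iso : forall X Y, isIso (thetaL X Y);
  thetaL_nat : forall X Y Y' (g : hom Y Y'),
      comp (thetaL X Y') (tensm (idm X) (shm g)) = comp (shm (tensm (idm X) g)) (thetaL X Y);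
  tensL_exact : forall W X Y Z (f : hom X Y) (g : hom Y Z) (h : hom Z (sh X)),
      dist f g h ->
      dist (tensm (idm W) f) (tensm (idm W) g) (comp (thetaL W X) (tensm (idm W) h));
  thetaR : forall X Y, hom (tens (sh Y) X) (sh (tens Y X));
  thetaR_iso : forall X Y, isIso (thetaR X Y);
  thetaR_nat : forall X Y Y' (g : hom Y Y'),
      comp (thetaR X Y') (tensm (shm g) (idm X)) = comp (shm (tensm g (idm X))) (thetaR X Y);
  tensR_exact : forall W X Y Z (f : hom X Y) (g : hom Y Z) (h : hom Z (sh X)),
      dist f g h ->
      dist (tensm f (idm W)) (tensm g (idm W)) (comp (thetaR W X) (tensm h (idm W)))
}.
Arguments tens {m}.
Arguments tunit {m}.

Section Ideals.
Variable K : MDC.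

Definition subcat := K -> Prop.

Definition triangulated_sub (I : subcat) : Prop :=
  [/\ exists Z, is_zero_obj Z /\ I Z,
      forall X Y : K, isomorphic X Y -> I X -> I Y,
      forall X : K, I X <-> I (sh X)
    & forall (X Y Z : K) (f : hom X Y) (g : hom Y Z) (h : hom Z (sh X)),
        dist f g h -> I X -> I Y -> I Z].

Definition thick_sub (I : subcat) : Prop :=
  triangulated_sub I /\ (forall X S : K, is_summand X S -> I S -> I X).

Definition thick_ideal (I : subcat) : Prop :=
  thick_sub I /\ (forall X Y : K, I X -> I (tens X Y) /\ I (tens Y X)).

Definition sub_incl (I J : subcat) : Prop := forall X, I X -> J X.

Definition gen_ideal (S : subcat) : subcat :=
  fun X => forall I, thick_ideal I -> sub_incl S I -> I X.

Definition principal (A : K) : subcat := gen_ideal (fun X => X = A).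

Definition proper_id (I : subcat) : Prop := exists X : K, ~ I X.

Definition coprime_id (I J : subcat) : Prop :=
  forall X : K, gen_ideal (fun Y => I Y \/ J Y) X.

Definition tens_incl (I J P : subcat) : Prop :=
  forall A B : K, I A -> J B -> P (tens A B).

Definition prime_ideal (P : subcat) : Prop :=
  [/\ thick_ideal P, proper_id P &
      forall I J, thick_ideal I -> thick_ideal J -> tens_incl I J P ->
        sub_incl I P \/ sub_incl J P].

Definition prime_radical : subcat := fun X => forall P, prime_ideal P -> P X.

Definition complementary (I J : subcat) : Prop :=
  sub_incl (fun X => I X /\ J X) prime_radical.

Definition thick_generated_by (G : K) : Prop :=
  forall I, thick_sub I -> I G -> forall X : K, I X.

Definition Spc := { P : subcat | prime_ideal P }.

Definition Vsupp (A : K) : Spc -> Prop := fun P => ~ (sval P) A.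

Definition spc_closed (Z : Spc -> Prop) : Prop :=
  exists S : K -> Prop, forall P : Spc, Z P <-> (forall A, S A -> Vsupp A P).

Definition spc_disconnected : Prop :=
  exists Z1 Z2 : Spc -> Prop,
    [/\ spc_closed Z1 /\ spc_closed Z2,
        (exists P, ~ Z1 P), (exists P, ~ Z2 P),
        (forall P, ~ (Z1 P /\ Z2 P)) & (forall P, Z1 P \/ Z2 P)].

Definition spc_noetherian : Prop :=
  forall Z : nat -> Spc -> Prop,
    (forall n, spc_closed (Z n)) ->
    (forall n P, Z n.+1 P -> Z n P) ->
    exists N, forall n, (N <= n)%N -> forall P, Z n P <-> Z N P.

End Ideals.

(* Given coprime complementary thick ideals I and J, a directed-union argument over
   biproducts yields A in I and B in J with 1 in <A, B>; primality then shows that V(A)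
   and V(B) are complementary proper closed subsets of Spc K.  Conversely, if
   Spc K = V(S1) + V(S2), let I and J be the intersections of the primes in V(S1) and in
   V(S2): they are proper and meet inside the prime radical.  Coprimality needs a finite
   list of objects of S1 u S2 such that every prime contains one of them, i.e.
   quasi-compactness of Spc K.  This holds if Spc K is noetherian, and also if G
   generates K, because the objects s covered in this finite sense then form an m-system
   with s (x) G (x) t in the role of the product st.  The product of the principal ideals
   of the listed objects from S1 lies in J but in no prime of V(S1), so no prime contains
   both I and J.  Primes avoiding an m-system exist by Zorn's lemma. *)

From Pilot Require Import Defs.
From mathcomp Require Import all_boot all_algebra.
From mathcomp Require classical_sets.
From Stdlib Require Import Classical IndefiniteDescription.
From Stdlib Require List.
(* mathcomp also exports a [hom] and a [comp]. *)
Import Defs.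
Set Implicit Arguments. Unset Strict Implicit. Unset Printing Implicit Defensive.
Import GRing.Theory.
Local Open Scope ring_scope.

Lemma addmorph0 (U V : zmodType) (f : U -> V) : {morph f : x y / x + y} -> f 0 = 0.
Proof. by move=> fD; apply: (addrI (f 0)); rewrite -fD !addr0. Qed.

Lemma addmorphN (U V : zmodType) (f : U -> V) :
  {morph f : x y / x + y} -> {morph f : x / - x}.
Proof. by move=> fD x; apply: (addrI (f x)); rewrite -fD !subrr addmorph0. Qed.

Lemma list_partition (T : Type) (S1 S2 : T -> Prop) (l : seq T) :
  (forall y, List.In y l -> S1 y \/ S2 y) ->
  exists l1 l2, [/\ forall y, List.In y l1 -> S1 y, forall y, List.In y l2 -> S2 y
    & forall y, List.In y l -> List.In y l1 \/ List.In y l2].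
Proof.
elim: l => [|x l IHl] lS; first by exists [::], [::].
have [l1 [l2 [l1S1 l2S2 l12]]] := IHl (fun y yl => lS y (or_intror yl)).
have [S1x|S2x] := lS x (or_introl erefl).
- exists (x :: l1), l2; split=> // [y [<-|/l1S1] // | y [<-|/l12 [] yl]];
    by [left; left | left; right | right].
- exists l1, (x :: l2); split=> // [y [<-|/l2S2] // | y [<-|/l12 [] yl]];
    by [right; left | left | right; right].
Qed.

Section Preadditive.
Variable C : PreaddCat.
Implicit Types X Y Z : C.

Lemma comp0m X Y Z (f : hom X Y) : comp (0 : hom Y Z) f = 0.
Proof. exact: (addmorph0 (fun g g' => compDl g g' f)). Qed.

Lemma compm0 X Y Z (g : hom Y Z) : comp g (0 : hom X Y) = 0.
Proof. exact: (addmorph0 (compDr g)). Qed.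

Lemma compNm X Y Z (g : hom Y Z) (f : hom X Y) : comp (- g) f = - comp g f.
Proof. exact: (addmorphN (fun g g' => compDl g g' f)). Qed.

Lemma compmN X Y Z (g : hom Y Z) (f : hom X Y) : comp g (- f) = - comp g f.
Proof. exact: (addmorphN (compDr g)). Qed.

Lemma isomorphic_refl X : isomorphic X X.
Proof. by exists (idm X), (idm X); rewrite comp1m. Qed.

Lemma isomorphic_sym X Y : isomorphic X Y -> isomorphic Y X.
Proof. by move=> [f [g [gf fg]]]; exists g, f. Qed.

Lemma isomorphic_trans X Y Z : isomorphic X Y -> isomorphic Y Z -> isomorphic X Z.
Proof.
move=> [f [f' [f'f ff']]] [g [g' [g'g gg']]].
exists (comp g f), (comp f' g'); split.
- by rewrite compA -(compA f') g'g compm1.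
- by rewrite compA -(compA g) ff' compm1.
Qed.

Lemma zero_objP Z : is_zero_obj Z <-> idm Z = 0.
Proof.
split=> [[_]|Z0]; first exact.
split=> X f.
- by rewrite -(compm1 f) Z0 compm0.
- by rewrite -(comp1m f) Z0 comp0m.
Qed.

Lemma zero_obj_isomorphic Z Z' : is_zero_obj Z -> is_zero_obj Z' -> isomorphic Z Z'.
Proof. by move=> /zero_objP Z0 /zero_objP Z'0; exists 0, 0; rewrite !comp0m. Qed.

End Preadditive.

Section Triangulated.
Variable T : TriCat.
Implicit Types X Y Z W : T.

Lemma shm0 X Y : shm (0 : hom X Y) = 0.
Proof. exact: (addmorph0 (@shm_add T X Y)). Qed.

Lemma sh_zero_obj Z : is_zero_obj Z -> is_zero_obj (sh Z).
Proof. by move=> /zero_objP Z0; apply/zero_objP; rewrite -shm_id Z0 shm0. Qed.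

Lemma dist_comp0 X Y Z (f : hom X Y) (g : hom Y Z) (h : hom Z (sh X)) :
  dist f g h -> comp g f = 0.
Proof.
move=> d; have [Z0 zZ0] := tc_zero T.
have [c [cg _]] := dist_morph (a := idm X) (b := f) (dist_id X zZ0) d erefl.
by rewrite -cg compm0.
Qed.

Lemma dist_zero_idm W Z0 : is_zero_obj Z0 ->
  dist (0 : hom Z0 W) (idm W) (0 : hom W (sh Z0)).
Proof.
by move=> zZ0; apply/dist_rot; rewrite shm0 oppr0; apply: dist_id; apply: sh_zero_obj.
Qed.

Lemma dist_weak_coker X Y Z W (f : hom X Y) (g : hom Y Z) (h : hom Z (sh X))
    (k : hom Y W) :
  dist f g h -> comp k f = 0 -> exists m : hom Z W, comp m g = k.
Proof.
move=> d kf; have [Z0 zZ0] := tc_zero T.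
have [m [mg _]] := dist_morph (a := 0 : hom X Z0) (b := k) d (dist_zero_idm W zZ0)
  (etrans kf (esym (compm0 _ _))).
by exists m; rewrite mg comp1m.
Qed.

Lemma dist_split_connecting0 X Y Z (f : hom X Y) (g : hom Y Z) (h : hom Z (sh X))
    (p : hom Y X) :
  dist f g h -> comp p f = idm X -> h = 0.
Proof.
move=> d pf; have [Z0 zZ0] := tc_zero T.
have [c [_ ch]] := dist_morph (a := idm X) (b := p) d (dist_id X zZ0)
  (etrans pf (esym (compm1 _))).
by move: ch; rewrite shm_id comp1m comp0m.
Qed.

Lemma dist_connecting0_epi X Y Z W (f : hom X Y) (g : hom Y Z) (h : hom Z (sh X))
    (k : hom Z W) :
  dist f g h -> h = 0 -> comp k g = 0 -> k = 0.
Proof.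
move=> d h0 kg; have [m <-] := dist_weak_coker (proj1 (dist_rot f g h) d) kg.
by rewrite h0 compm0.
Qed.

Lemma biprod_dist X Y S (i1 : hom X S) (i2 : hom Y S) (p1 : hom S X) (p2 : hom S Y) :
  is_biprod i1 i2 p1 p2 -> dist i1 p2 (0 : hom Y (sh X)).
Proof.
(* The cone of the split mono i1 is Y: p2 factors through it as t, inverse to g i2. *)
move=> [p1i1 p2i2 p2i1 p1i2 split_S].
have [Z [g [h d]]] := dist_ext i1.
have h0 := dist_split_connecting0 d p1i1.
have [t tg] := dist_weak_coker d p2i1.
have t_retr : comp t (comp g i2) = idm Y by rewrite compA tg.
have t_sect : comp (comp g i2) t = idm Z.
  apply/eqP; rewrite -subr_eq0; apply/eqP; apply: (dist_connecting0_epi d h0).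
  have i2p2 : comp i2 p2 = idm S - comp i1 p1 by rewrite -split_S addrC addKr.
  rewrite compDl compNm comp1m -compA tg -compA i2p2 compDr compmN compA.
  by rewrite (dist_comp0 d) comp0m compm1 subr0 subrr.
apply: (dist_iso (a := idm X) (b := idm S) (c := t) _ _ _ _ _ _ d).
- by exists (idm X); rewrite comp1m.
- by exists (idm S); rewrite comp1m.
- by exists (comp g i2).
- by rewrite comp1m compm1.
- by rewrite tg compm1.
- by rewrite h0 compm0 comp0m.
Qed.

End Triangulated.

Section Monoidal.
Variable K : MDC.
Implicit Types X Y Z : K.

Lemma tensm0l X X' Y Y' (g : hom Y Y') : tensm (0 : hom X X') g = 0.
Proof. exact: (addmorph0 (fun f f' => tensm_addl f f' g)). Qed.

Lemma tensm0r X X' Y Y' (f : hom X X') : tensm f (0 : hom Y Y') = 0.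
Proof. exact: (addmorph0 (tensm_addr f)). Qed.

Lemma tens_isomorphic X X' Y Y' : isomorphic X X' -> isomorphic Y Y' ->
  isomorphic (tens X Y) (tens X' Y').
Proof.
move=> [f [f' [f'f ff']]] [g [g' [g'g gg']]].
exists (tensm f g), (tensm f' g').
by rewrite -!tensm_comp f'f ff' g'g gg' !tensm_id.
Qed.

Lemma tens_zero_objl Z Y : is_zero_obj Z -> is_zero_obj (tens Z Y).
Proof. by move=> /zero_objP Z0; apply/zero_objP; rewrite -tensm_id Z0 tensm0l. Qed.

Lemma tens_zero_objr Z Y : is_zero_obj Z -> is_zero_obj (tens Y Z).
Proof. by move=> /zero_objP Z0; apply/zero_objP; rewrite -tensm_id Z0 tensm0r. Qed.

Lemma isomorphic_assoc X Y Z : isomorphic (tens (tens X Y) Z) (tens X (tens Y Z)).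
Proof. by exists (assoc X Y Z); apply: assoc_iso. Qed.

Lemma isomorphic_lunit X : isomorphic (tens tunit X) X.
Proof. by exists (lunit X); apply: lunit_iso. Qed.

Lemma isomorphic_tens_shl X Y : isomorphic (tens (sh X) Y) (sh (tens X Y)).
Proof. by exists (thetaR Y X); apply: thetaR_iso. Qed.

Lemma isomorphic_tens_shr X Y : isomorphic (tens Y (sh X)) (sh (tens Y X)).
Proof. by exists (thetaL Y X); apply: thetaL_iso. Qed.

Lemma summand_tensl X S Y : is_summand X S -> is_summand (tens X Y) (tens S Y).
Proof.
move=> [X' [i1 [i2 [p1 [p2 [e1 e2 e3 e4 e5]]]]]].
exists (tens X' Y), (tensm i1 (idm Y)), (tensm i2 (idm Y)),
  (tensm p1 (idm Y)), (tensm p2 (idm Y)).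
split; rewrite -?tensm_comp ?compm1 ?e1 ?e2 ?e3 ?e4 ?tensm_id ?tensm0l //.
by rewrite -tensm_addl e5 tensm_id.
Qed.

Lemma summand_tensr X S Y : is_summand X S -> is_summand (tens Y X) (tens Y S).
Proof.
move=> [X' [i1 [i2 [p1 [p2 [e1 e2 e3 e4 e5]]]]]].
exists (tens Y X'), (tensm (idm Y) i1), (tensm (idm Y) i2),
  (tensm (idm Y) p1), (tensm (idm Y) p2).
split; rewrite -?tensm_comp ?compm1 ?e1 ?e2 ?e3 ?e4 ?tensm_id ?tensm0r //.
by rewrite -tensm_addr e5 tensm_id.
Qed.

End Monoidal.

Section ThickSubcategories.
Variable K : MDC.
Implicit Types (X Y Z S : K) (I M : subcat K).

Lemma thick_zero I Z : thick_sub I -> is_zero_obj Z -> I Z.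
Proof.
by move=> [[[Z0 [zZ0 IZ0]] Iiso _ _] _] zZ; apply: Iiso (zero_obj_isomorphic zZ0 zZ) IZ0.
Qed.

Lemma thick_iso I X Y : thick_sub I -> isomorphic X Y -> I X -> I Y.
Proof. by move=> [[_ Iiso _ _] _]; apply: Iiso. Qed.

Lemma thick_sh I X : thick_sub I -> I X <-> I (sh X).
Proof. by move=> [[_ _ Ish _] _]; apply: Ish. Qed.

Lemma thick_cone I X Y Z (f : hom X Y) (g : hom Y Z) (h : hom Z (sh X)) :
  thick_sub I -> dist f g h -> I X -> I Y -> I Z.
Proof. by move=> [[_ _ _ Icone] _]; apply: Icone. Qed.

Lemma thick_summand I X S : thick_sub I -> is_summand X S -> I S -> I X.
Proof. by move=> [_ Isum]; apply: Isum. Qed.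

Lemma thick_extension I X Y Z (f : hom X Y) (g : hom Y Z) (h : hom Z (sh X)) :
  thick_sub I -> dist f g h -> I X -> I Z -> I Y.
Proof.
move=> tI d IX IZ; have d' := proj1 (dist_rot _ _ _) (proj1 (dist_rot f g h) d).
by apply/(thick_sh Y tI); apply: (thick_cone tI d' IZ); apply/(thick_sh X tI).
Qed.

Lemma thick_biprod I X Y S (i1 : hom X S) (i2 : hom Y S) (p1 : hom S X) (p2 : hom S Y) :
  thick_sub I -> is_biprod i1 i2 p1 p2 -> I X -> I Y -> I S.
Proof. by move=> tI /biprod_dist; apply: thick_extension. Qed.

Lemma thick_subP I :
  (forall Z, is_zero_obj Z -> I Z) ->
  (forall X Y, isomorphic X Y -> I X -> I Y) ->
  (forall X, I X -> I (sh X)) -> (forall X, I (sh X) -> I X) ->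
  (forall X Y Z (f : hom X Y) (g : hom Y Z) (h : hom Z (sh X)),
      dist f g h -> I X -> I Y -> I Z) ->
  (forall X S, is_summand X S -> I S -> I X) -> thick_sub I.
Proof.
move=> Izero Iiso Ish Iunsh Icone Isum; do 2!split=> //.
- by have [Z0 zZ0] := tc_zero K; exists Z0; split; last exact: Izero.
- by move=> X; split; [apply: Ish | apply: Iunsh].
Qed.

Lemma thick_sub_bigcap (Ix : Type) (P : Ix -> Prop) (F : Ix -> subcat K) :
  (forall i, P i -> thick_sub (F i)) -> thick_sub (fun X => forall i, P i -> F i X).
Proof.
move=> tF; apply: thick_subP.
- by move=> Z zZ i Pi; apply: thick_zero (tF i Pi) zZ.
- by move=> X Y XY FX i Pi; apply: thick_iso (tF i Pi) XY (FX i Pi).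
- by move=> X FX i Pi; apply/(thick_sh X (tF i Pi))/FX.
- by move=> X FX i Pi; apply/(thick_sh X (tF i Pi))/FX.
- by move=> X Y Z f g h d FX FY i Pi; apply: thick_cone (tF i Pi) d (FX i Pi) (FY i Pi).
- by move=> X S sXS FS i Pi; apply: thick_summand (tF i Pi) sXS (FS i Pi).
Qed.

Lemma thick_sub_preim_tensl M Y : thick_sub M -> thick_sub (fun X => M (tens X Y)).
Proof.
move=> tM; apply: thick_subP.
- by move=> Z zZ; apply: thick_zero tM (tens_zero_objl Y zZ).
- by move=> X X' XX'; apply: thick_iso tM (tens_isomorphic XX' (isomorphic_refl Y)).
- move=> X MX; apply: (thick_iso tM (isomorphic_sym (isomorphic_tens_shl X Y))).
  exact: (proj1 (thick_sh _ tM) MX).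
- by move=> X MX; apply/(thick_sh _ tM); apply: thick_iso tM (isomorphic_tens_shl X Y) MX.
- by move=> X X' Z f g h d; apply: thick_cone tM (tensR_exact Y d).
- by move=> X S sXS; apply: thick_summand tM (summand_tensl Y sXS).
Qed.

Lemma thick_sub_preim_tensr M Y : thick_sub M -> thick_sub (fun X => M (tens Y X)).
Proof.
move=> tM; apply: thick_subP.
- by move=> Z zZ; apply: thick_zero tM (tens_zero_objr Y zZ).
- by move=> X X' XX'; apply: thick_iso tM (tens_isomorphic (isomorphic_refl Y) XX').
- move=> X MX; apply: (thick_iso tM (isomorphic_sym (isomorphic_tens_shr X Y))).
  exact: (proj1 (thick_sh _ tM) MX).
- by move=> X MX; apply/(thick_sh _ tM); apply: thick_iso tM (isomorphic_tens_shr X Y) MX.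
- by move=> X X' Z f g h d; apply: thick_cone tM (tensL_exact Y d).
- by move=> X S sXS; apply: thick_summand tM (summand_tensr Y sXS).
Qed.

End ThickSubcategories.

Section ThickIdeals.
Variable K : MDC.
Implicit Types (X Y Z S A B : K) (I J M L : subcat K).

Lemma ideal_thick I : thick_ideal I -> thick_sub I.
Proof. by case. Qed.

Lemma ideal_tensl I X Y : thick_ideal I -> I X -> I (tens X Y).
Proof. by move=> [_ Itens] IX; case: (Itens X Y IX). Qed.

Lemma ideal_tensr I X Y : thick_ideal I -> I X -> I (tens Y X).
Proof. by move=> [_ Itens] IX; case: (Itens X Y IX). Qed.

Lemma ideal_iso I X Y : thick_ideal I -> isomorphic X Y -> I X -> I Y.
Proof. by move/ideal_thick; apply: thick_iso. Qed.

Lemma ideal_unit I : thick_ideal I -> I tunit -> forall X, I X.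
Proof. by move=> tI I1 X; apply: ideal_iso tI (isomorphic_lunit X) (ideal_tensl _ tI I1). Qed.

Lemma thick_idealP I : thick_sub I -> (forall X Y, I X -> I (tens X Y)) ->
  (forall X Y, I X -> I (tens Y X)) -> thick_ideal I.
Proof. by move=> tI Il Ir; split=> // X Y IX; split; [apply: Il | apply: Ir]. Qed.

Lemma thick_ideal_ext I J : (forall X, I X <-> J X) -> thick_ideal I -> thick_ideal J.
Proof.
move=> IJ tI; have tS := ideal_thick tI.
apply: thick_idealP; last 2 first.
- by move=> X Y /IJ IX; apply/IJ; apply: ideal_tensl.
- by move=> X Y /IJ IX; apply/IJ; apply: ideal_tensr.
apply: thick_subP.
- by move=> Z zZ; apply/IJ; apply: thick_zero tS zZ.
- by move=> X Y XY /IJ IX; apply/IJ; apply: thick_iso tS XY IX.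
- by move=> X /IJ IX; apply/IJ; apply/(thick_sh X tS).
- by move=> X /IJ IX; apply/IJ; apply/(thick_sh X tS).
- by move=> X Y Z f g h d /IJ IX /IJ IY; apply/IJ; apply: thick_cone tS d IX IY.
- by move=> X S sXS /IJ IS; apply/IJ; apply: thick_summand tS sXS IS.
Qed.

Lemma thick_ideal_bigcap (Ix : Type) (P : Ix -> Prop) (F : Ix -> subcat K) :
  (forall i, P i -> thick_ideal (F i)) -> thick_ideal (fun X => forall i, P i -> F i X).
Proof.
move=> tF; apply: thick_idealP.
- by apply: thick_sub_bigcap => i Pi; apply: ideal_thick (tF i Pi).
- by move=> X Y FX i Pi; apply: ideal_tensl (tF i Pi) (FX i Pi).
- by move=> X Y FX i Pi; apply: ideal_tensr (tF i Pi) (FX i Pi).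
Qed.

Definition directed_family (F : subcat K -> Prop) :=
  forall I J, F I -> F J -> exists2 L, F L & sub_incl I L /\ sub_incl J L.

Lemma thick_ideal_directed_bigcup (F : subcat K -> Prop) :
  (exists I, F I) -> (forall I, F I -> thick_ideal I) -> directed_family F ->
  thick_ideal (fun X => exists2 I, F I & I X).
Proof.
move=> [I0 FI0] tF dF; apply: thick_idealP; last 2 first.
- by move=> X Y [I FI IX]; exists I => //; apply: ideal_tensl (tF _ FI) IX.
- by move=> X Y [I FI IX]; exists I => //; apply: ideal_tensr (tF _ FI) IX.
apply: thick_subP.
- by move=> Z zZ; exists I0 => //; apply: thick_zero (ideal_thick (tF _ FI0)) zZ.
- by move=> X Y XY [I FI IX]; exists I => //; apply: ideal_iso (tF _ FI) XY IX.
- by move=> X [I FI IX]; exists I => //; apply/(thick_sh X (ideal_thick (tF _ FI))).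
- by move=> X [I FI IX]; exists I => //; apply/(thick_sh X (ideal_thick (tF _ FI))).
- move=> X Y Z f g h d [I FI IX] [J FJ JY].
  have [L FL [IL JL]] := dF _ _ FI FJ.
  by exists L => //; apply: thick_cone (ideal_thick (tF _ FL)) d (IL _ IX) (JL _ JY).
- move=> X S sXS [I FI IS]; exists I => //.
  exact: thick_summand (ideal_thick (tF _ FI)) sXS IS.
Qed.

Lemma thick_ideal_gen (S : subcat K) : thick_ideal (gen_ideal S).
Proof.
apply: thick_ideal_ext (@thick_ideal_bigcap _ (fun I => thick_ideal I /\ sub_incl S I) id
  (fun _ tS => proj1 tS)) => X.
by split=> [SX I tI SI | SX I [tI SI]]; [apply: SX | apply: SX tI SI].
Qed.

Lemma gen_ideal_sub (S : subcat K) : sub_incl S (gen_ideal S).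
Proof. by move=> X SX I _; apply. Qed.

Lemma gen_ideal_min (S : subcat K) I : thick_ideal I -> sub_incl S I -> sub_incl (gen_ideal S) I.
Proof. by move=> tI SI X; apply. Qed.

Lemma gen_ideal_mono (S S' : subcat K) : sub_incl S S' -> sub_incl (gen_ideal S) (gen_ideal S').
Proof. by move=> SS'; apply: gen_ideal_min (thick_ideal_gen S') _ => X /SS' /gen_ideal_sub. Qed.

Lemma gen_ideal_summand (S S' : subcat K) :
  (forall X, S X -> exists2 Y, S' Y & is_summand X Y) ->
  sub_incl (gen_ideal S) (gen_ideal S').
Proof.
move=> SS'; apply: gen_ideal_min (thick_ideal_gen S') _ => X /SS' [Y S'Y sXY].
exact: thick_summand (ideal_thick (thick_ideal_gen S')) sXY (gen_ideal_sub S'Y).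
Qed.

Lemma principal_self A : principal A A.
Proof. exact: gen_ideal_sub. Qed.

Lemma principal_min I A : thick_ideal I -> I A -> sub_incl (principal A) I.
Proof. by move=> tI IA; apply: gen_ideal_min tI _ => X ->. Qed.

Lemma ideal_biprod I X Y : thick_ideal I -> I X -> I Y ->
  exists S, [/\ I S, is_summand X S & is_summand Y S].
Proof.
move=> tI IX IY; have [S [i1 [i2 [p1 [p2 bS]]]]] := tc_biprod X Y.
exists S; split; first exact: thick_biprod (ideal_thick tI) bS IX IY.
- by exists Y, i1, i2, p1, p2.
- by exists X, i2, i1, p2, p1; case: bS => *; split; rewrite // addrC.
Qed.

End ThickIdeals.

Section IdealProducts.
Variable K : MDC.
Implicit Types (X Y A B : K) (I J M : subcat K).

Definition ideal_prod I J : subcat K :=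
  gen_ideal (fun X => exists A B, [/\ I A, J B & X = tens A B]).

Lemma ideal_prod_tens I J A B : I A -> J B -> ideal_prod I J (tens A B).
Proof. by move=> IA JB; apply: gen_ideal_sub; exists A, B. Qed.

Lemma ideal_prod_min I J M : thick_ideal M -> tens_incl I J M -> sub_incl (ideal_prod I J) M.
Proof. by move=> tM IJM; apply: gen_ideal_min tM _ => _ [A [B [IA JB ->]]]; apply: IJM. Qed.

Lemma ideal_prod_mono I I' J J' :
  sub_incl I I' -> sub_incl J J' -> sub_incl (ideal_prod I J) (ideal_prod I' J').
Proof.
move=> II' JJ'; apply: gen_ideal_mono => _ [A [B [IA JB ->]]].
by exists A, B; split; [apply: II' | apply: JJ' |].
Qed.

Lemma tens_incl_genl I J M : thick_ideal M -> (forall C Y, J Y -> J (tens C Y)) ->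
  tens_incl I J M -> tens_incl (gen_ideal I) J M.
Proof.
move=> tM Jtens IJM.
pose D X := forall Y, J Y -> M (tens X Y).
have tD : thick_ideal D.
  apply: thick_idealP.
  - by apply: thick_sub_bigcap => Y _; apply: thick_sub_preim_tensl (ideal_thick tM).
  - move=> X C DX Y JY; apply: (ideal_iso tM (isomorphic_sym (isomorphic_assoc X C Y))).
    exact: DX (Jtens _ _ JY).
  - move=> X C DX Y JY; apply: (ideal_iso tM (isomorphic_sym (isomorphic_assoc C X Y))).
    exact: ideal_tensr tM (DX _ JY).
by move=> X Y IX; apply: (gen_ideal_min tD _ IX) => X' IX' Y' JY'; apply: IJM.
Qed.

Lemma tens_incl_genr I J M : thick_ideal M -> (forall C X, I X -> I (tens X C)) ->
  tens_incl I J M -> tens_incl I (gen_ideal J) M.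
Proof.
move=> tM Itens IJM.
pose D Y := forall X, I X -> M (tens X Y).
have tD : thick_ideal D.
  apply: thick_idealP.
  - by apply: thick_sub_bigcap => X _; apply: thick_sub_preim_tensr (ideal_thick tM).
  - move=> Y C DY X IX; apply: (ideal_iso tM (isomorphic_assoc X Y C)).
    exact: ideal_tensl tM (DY _ IX).
  - move=> Y C DY X IX; apply: (ideal_iso tM (isomorphic_assoc X C Y)).
    exact: DY (Itens _ _ IX).
by move=> X Y IX JY; apply: (gen_ideal_min tD _ JY X IX) => Y' JY' X' IX'; apply: IJM.
Qed.

Lemma tens_incl_gen I J M : thick_ideal M -> (forall C Y, J Y -> J (tens C Y)) ->
  tens_incl I J M -> tens_incl (gen_ideal I) (gen_ideal J) M.
Proof.
move=> tM Jtens IJM; apply: tens_incl_genr => //.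
- by move=> C X; apply: ideal_tensl (thick_ideal_gen I).
- exact: tens_incl_genl.
Qed.

End IdealProducts.

Section PrimeIdeals.
Variable K : MDC.
Implicit Types (X Y s t : K) (I J L M P : subcat K) (S : K -> Prop).

Lemma prime_thick_ideal P : prime_ideal P -> thick_ideal P.
Proof. by case. Qed.

Lemma proper_no_unit I : thick_ideal I -> proper_id I -> ~ I tunit.
Proof. by move=> tI [X IX] I1; apply: IX (ideal_unit tI I1 X). Qed.

Lemma prime_no_unit P : prime_ideal P -> ~ P tunit.
Proof. by case=> tP pP _; apply: proper_no_unit. Qed.

Lemma prime_ideal_prod P I J : prime_ideal P -> thick_ideal I -> thick_ideal J ->
  sub_incl (ideal_prod I J) P -> sub_incl I P \/ sub_incl J P.
Proof.
move=> [_ _ Pprime] tI tJ IJP; apply: Pprime => // A B IA JB.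
by apply: IJP; apply: ideal_prod_tens.
Qed.

Lemma prime_principal P s t : prime_ideal P ->
  sub_incl (ideal_prod (principal s) (principal t)) P -> P s \/ P t.
Proof.
move=> pP stP; have [sP|tP] := prime_ideal_prod pP (thick_ideal_gen _) (thick_ideal_gen _) stP.
- by left; apply: sP; apply: principal_self.
- by right; apply: tP; apply: principal_self.
Qed.

(* The noncommutative analogue of a multiplicative set. *)
Definition m_system S :=
  forall s t, S s -> S t -> exists2 u, S u & ideal_prod (principal s) (principal t) u.

Definition avoiding L S I := [/\ thick_ideal I, sub_incl L I & forall s, S s -> ~ I s].

Lemma avoiding_chain_bigcup L S (F : subcat K -> Prop) :
  (exists I, F I) -> (forall I, F I -> avoiding L S I) ->
  (forall I J, F I -> F J -> sub_incl I J \/ sub_incl J I) ->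
  avoiding L S (fun X => exists2 I, F I & I X).
Proof.
move=> [I0 FI0] aF Ftot; split.
- apply: thick_ideal_directed_bigcup; first by exists I0.
  + by move=> I /aF [].
  + move=> I J FI FJ; case: (Ftot I J FI FJ) => [IJ|JI]; [exists J | exists I] => //.
    * by split=> // X.
    * by split=> // X.
- by move=> X LX; exists I0 => //; have [_ + _] := aF _ FI0; apply.
- by move=> s Ss [I FI]; have [_ _] := aF _ FI; apply.
Qed.

Lemma maximal_avoiding L S : thick_ideal L -> (forall s, S s -> ~ L s) ->
  exists2 M, avoiding L S M & forall I, avoiding L S I -> sub_incl M I -> sub_incl I M.
Proof.
move=> tL LS.
(* The empty chain has the empty union, which is not a thick ideal. *)
pose Q (A : subcat K) := (forall X, ~ A X) \/ avoiding L S A.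
have [M [QM Mmax]] : exists M, Q M /\ forall I, classical_sets.proper M I -> ~ Q I.
  apply: classical_sets.Zorn_bigcup => F FQ Ftot.
  have [[I0 [FI0 aI0]]|noav] := classic (exists I, F I /\ avoiding L S I); last first.
    left=> X [I FI IX]; case: (FQ I FI) => [/(_ X)//|aI].
    by apply: noav; exists I.
  right; have := @avoiding_chain_bigcup L S (fun I => F I /\ avoiding L S I).
  case=> [||I J [FI _] [FJ _]|]; first by exists I0.
  - by move=> I [].
  - exact: Ftot.
  move=> tU _ _; split.
  + apply: thick_ideal_ext tU => X; split=> [[I [FI _] IX] | [I FI IX]]; exists I => //.
    by split=> //; case: (FQ I FI) => // /(_ X).
  + by move=> X LX; exists I0 => //; have [_ + _] := aI0; apply.
  + by move=> s Ss [I FI Is]; case: (FQ I FI) => [/(_ s)//|[_ _ IS]]; apply: IS Ss Is.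
have aM : avoiding L S M.
  case: QM => // M0; exfalso; apply: (Mmax L); last by rewrite /Q; right; split.
  split=> [X /M0 // | LM]; have [Z zZ] := tc_zero K.
  exact: M0 _ (LM Z (thick_zero (ideal_thick tL) zZ)).
exists M => // I aI MI; apply: NNPP => IM.
by apply: (Mmax I); [split | rewrite /Q; right].
Qed.

Lemma maximal_avoiding_prime L S M : m_system S -> (exists s, S s) ->
  avoiding L S M -> (forall I, avoiding L S I -> sub_incl M I -> sub_incl I M) ->
  prime_ideal M.
Proof.
move=> mS [s0 Ss0] [tM LM MS] Mmax; split=> //; first by exists s0; apply: MS.
have meets I : thick_ideal I -> ~ sub_incl I M ->
    exists2 s, S s & gen_ideal (fun X => M X \/ I X) s.
  move=> tI IM; apply: NNPP => nomeet; apply: IM => X IX.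
  apply: (Mmax (gen_ideal (fun X => M X \/ I X))).
  - split; first exact: thick_ideal_gen.
    + by move=> Y /LM MY; apply: gen_ideal_sub; left.
    + by move=> s Ss MIs; apply: nomeet; exists s.
  - by move=> Y MY; apply: gen_ideal_sub; left.
  - by apply: gen_ideal_sub; right.
move=> I J tI tJ IJM.
have [IM|IM] := classic (sub_incl I M); first by left.
have [JM|JM] := classic (sub_incl J M); first by right.
have [s Ss MIs] := meets I tI IM; have [t St MJt] := meets J tJ JM.
have [u Su stu] := mS s t Ss St; exfalso; apply: (MS u Su).
have MIJ : tens_incl (gen_ideal (fun X => M X \/ I X)) (gen_ideal (fun X => M X \/ J X)) M.
  apply: tens_incl_gen => //.
  - by move=> C Y [MY|JY]; [left; apply: ideal_tensr tM MY | right; apply: ideal_tensr tJ JY].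
  - move=> X Y [MX|IX] [MY|JY]; try exact: ideal_tensl tM MX.
    + exact: ideal_tensr tM MY.
    + exact: IJM.
apply: (ideal_prod_min tM MIJ); apply: ideal_prod_mono stu.
- exact: principal_min (thick_ideal_gen _) MIs.
- exact: principal_min (thick_ideal_gen _) MJt.
Qed.

Lemma prime_avoiding L S : thick_ideal L -> m_system S -> (exists s, S s) ->
  (forall s, S s -> ~ L s) ->
  exists P, [/\ prime_ideal P, sub_incl L P & forall s, S s -> ~ P s].
Proof.
move=> tL mS S0 LS; have [M aM Mmax] := maximal_avoiding tL LS.
have [_ LM MS] := aM.
by exists M; split=> //; apply: maximal_avoiding_prime Mmax.
Qed.

Lemma prime_exists I : thick_ideal I -> proper_id I -> exists P, prime_ideal P /\ sub_incl I P.
Proof.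
move=> tI pI; have [|||P [pP IP _]] := @prime_avoiding I (eq^~ tunit) tI; last by exists P.
- move=> _ _ -> ->; exists tunit => //.
  have := ideal_prod_tens (principal_self (A := @tunit K)) (principal_self (A := @tunit K)).
  exact: ideal_iso (thick_ideal_gen _) (isomorphic_lunit tunit).
- by exists tunit.
- by move=> _ ->; apply: proper_no_unit.
Qed.

End PrimeIdeals.

Section Splittings.
Variable K : MDC.
Implicit Types (X Y A B : K) (I J : subcat K).

Definition splitting_ideals I J :=
  [/\ thick_ideal I /\ thick_ideal J, proper_id I, proper_id J, coprime_id I J
    & complementary I J].

Definition splitting_objects A B :=
  [/\ proper_id (principal A), proper_id (principal B),
      coprime_id (principal A) (principal B) & complementary (principal A) (principal B)].

Lemma proper_id_sub I J : sub_incl I J -> proper_id J -> proper_id I.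
Proof. by move=> IJ [X JX]; exists X => /IJ. Qed.

Lemma coprime_id_unit I J : gen_ideal (fun Y => I Y \/ J Y) tunit -> coprime_id I J.
Proof. exact: ideal_unit (thick_ideal_gen _). Qed.

Lemma gen_union_pair I J X : thick_ideal I -> thick_ideal J ->
  gen_ideal (fun Y => I Y \/ J Y) X ->
  exists A B, [/\ I A, J B & gen_ideal (fun Y => Y = A \/ Y = B) X].
Proof.
move=> tI tJ.
pose pairs L := exists A B, [/\ I A, J B & L = gen_ideal (fun Y => Y = A \/ Y = B)].
have [Z0 zZ0] := tc_zero K.
have [IZ0 JZ0] : I Z0 /\ J Z0 by split; apply: thick_zero zZ0; apply: ideal_thick.
have tU : thick_ideal (fun X => exists2 L, pairs L & L X).
  apply: thick_ideal_directed_bigcup.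
  - by exists (gen_ideal (fun Y => Y = Z0 \/ Y = Z0)), Z0, Z0.
  - by move=> L [A [B [_ _ ->]]]; apply: thick_ideal_gen.
  move=> _ _ [A [B [IA JB ->]]] [A' [B' [IA' JB' ->]]].
  have [A2 [IA2 sA sA']] := ideal_biprod tI IA IA'.
  have [B2 [JB2 sB sB']] := ideal_biprod tJ JB JB'.
  exists (gen_ideal (fun Y => Y = A2 \/ Y = B2)); first by exists A2, B2.
  by split; apply: gen_ideal_summand => _ [->|->];
    [exists A2 | exists B2 | exists A2 | exists B2]; rewrite //; [left | right | left | right].
move=> /(gen_ideal_min tU) [|_ [A [B [IA JB ->]]] AB]; last by exists A, B.
move=> Y [IY|JY].
- by exists (gen_ideal (fun W => W = Y \/ W = Z0)); [exists Y, Z0 | apply: gen_ideal_sub; left].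
- by exists (gen_ideal (fun W => W = Z0 \/ W = Y)); [exists Z0, Y | apply: gen_ideal_sub; right].
Qed.

Lemma splitting_ideals_objects I J : splitting_ideals I J -> exists A B, splitting_objects A B.
Proof.
move=> [[tI tJ] pI pJ IJ1 IJrad].
have [A [B [IA JB AB1]]] := gen_union_pair tI tJ (IJ1 tunit).
have AI := principal_min tI IA; have BJ := principal_min tJ JB.
exists A, B; split.
- exact: proper_id_sub AI pI.
- exact: proper_id_sub BJ pJ.
- apply: coprime_id_unit; apply: gen_ideal_mono AB1 => _ [->|->];
    [left | right]; apply: principal_self.
- by move=> X [/AI IX /BJ JX]; apply: IJrad.
Qed.

Lemma splitting_objects_ideals A B :
  splitting_objects A B -> splitting_ideals (principal A) (principal B).
Proof. by case=> *; split=> //; split; apply: thick_ideal_gen. Qed.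

Lemma principal_Vsupp_exists A : proper_id (principal A) -> exists P : Spc K, ~ Vsupp A P.
Proof.
move=> pA; have [P [pP AP]] := prime_exists (thick_ideal_gen _) pA.
by exists (exist _ P pP) => VA; apply: VA; apply: AP; apply: principal_self.
Qed.

Lemma splitting_objects_disconnected A B : splitting_objects A B -> spc_disconnected K.
Proof.
move=> [pA pB AB1 ABrad]; exists (Vsupp A), (Vsupp B); split.
- by split; [exists (eq^~ A) | exists (eq^~ B)] => P; split=> [VP _ -> | /(_ _ erefl)].
- exact: principal_Vsupp_exists.
- exact: principal_Vsupp_exists.
- move=> [P pP] [/= AP BP].
  have ABP : sub_incl (ideal_prod (principal A) (principal B)) P.
    apply: ideal_prod_min (prime_thick_ideal pP) _ => X Y AX BY.
    apply: (ABrad _ _ P pP); split.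
    + exact: ideal_tensl (thick_ideal_gen _) AX.
    + exact: ideal_tensr (thick_ideal_gen _) BY.
  by case: (prime_principal pP ABP).
- move=> [P pP]; rewrite /Vsupp /=; have tP := prime_thick_ideal pP.
  have [AP|] := classic (P A); last by left.
  have [BP|] := classic (P B); last by right.
  have ABP : sub_incl (fun Y => principal A Y \/ principal B Y) P.
    by move=> X [/(principal_min tP AP) | /(principal_min tP BP)].
  by case: (prime_no_unit pP (gen_ideal_min tP ABP (AB1 tunit))).
Qed.

End Splittings.

Section Spectrum.
Variable K : MDC.
Implicit Types (X Y s t : K) (S : K -> Prop) (l : seq K).

Definition Vset S (q : Spc K) : Prop := forall A, S A -> Vsupp A q.

Definition spc_kernel (Z : Spc K -> Prop) : subcat K := fun X => forall q, Z q -> sval q X.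

Definition spc_covered_by l : Prop := forall q : Spc K, exists2 y, List.In y l & sval q y.

Definition spc_quasi_compact : Prop :=
  forall S, (forall q : Spc K, exists2 y, S y & sval q y) ->
  exists l, (forall y, List.In y l -> S y) /\ spc_covered_by l.

Lemma thick_ideal_kernel Z : thick_ideal (spc_kernel Z).
Proof. by apply: thick_ideal_bigcap => q _; apply: prime_thick_ideal (proj2_sig q). Qed.

Lemma kernel_proper (Z : Spc K -> Prop) q : Z q -> proper_id (spc_kernel Z).
Proof. by move=> Zq; have [_ [X qX] _] := proj2_sig q; exists X => /(_ _ Zq). Qed.

Lemma spc_disconnectedP : spc_disconnected K ->
  exists S1 S2, [/\ exists q, ~ Vset S1 q, exists q, ~ Vset S2 q,
    forall q, ~ (Vset S1 q /\ Vset S2 q) & forall q, Vset S1 q \/ Vset S2 q].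
Proof.
move=> [Z1 [Z2 [[[S1 Z1S1] [S2 Z2S2]] [q1 Zq1] [q2 Zq2] Z12 Z1uZ2]]].
exists S1, S2; split.
- by exists q1 => /Z1S1.
- by exists q2 => /Z2S2.
- by move=> q [/Z1S1 Zq /Z2S2 Zq']; apply: (Z12 q).
- by move=> q; case: (Z1uZ2 q) => [/Z1S1|/Z2S2]; [left | right].
Qed.

Fixpoint principal_prod l : subcat K :=
  if l is y :: l' then ideal_prod (principal y) (principal_prod l') else principal tunit.

Lemma thick_ideal_principal_prod l : thick_ideal (principal_prod l).
Proof. by case: l => [|y l]; apply: thick_ideal_gen. Qed.

Lemma principal_prod_sub I l y : thick_ideal I -> List.In y l -> I y ->
  sub_incl (principal_prod l) I.
Proof.
move=> tI + Iy; elim: l => [|x l IHl] //= [->|yl].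
- by apply: (ideal_prod_min tI) => A B /(principal_min tI Iy) IA _; apply: ideal_tensl.
- by apply: (ideal_prod_min tI) => A B _ /(IHl yl) IB; apply: ideal_tensr.
Qed.

Lemma principal_prod_not_sub (P : Spc K) l : Vset (fun z => List.In z l) P ->
  ~ sub_incl (principal_prod l) (sval P).
Proof.
case: P => P pP /=; elim: l => [|x l IHl] /= lP lsubP.
  exact: prime_no_unit pP (lsubP _ (principal_self (A := @tunit K))).
have [xP|lsub] := prime_ideal_prod pP (thick_ideal_gen _) (thick_ideal_principal_prod l) lsubP.
- by apply: (lP x); [left | apply: xP; apply: principal_self].
- by apply: IHl lsub => y yl; apply: lP; right.
Qed.

(* A prime in [Vset S2] avoids [l2], so it contains an element of [l1]. *)
Lemma principal_prod_sub_kernel S2 l1 l2 : (forall y, List.In y l2 -> S2 y) ->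
  spc_covered_by (l1 ++ l2) -> sub_incl (principal_prod l1) (spc_kernel (Vset S2)).
Proof.
move=> l2S2 cover X l1X q S2q; have [y yl qy] := cover q.
case: (List.in_app_or _ _ _ yl) => [yl1|yl2].
- exact: principal_prod_sub (prime_thick_ideal (proj2_sig q)) yl1 qy _ l1X.
- by case: (S2q y (l2S2 y yl2)).
Qed.

Lemma kernel_not_sub S1 S2 l1 l2 (p : Spc K) :
  (forall y, List.In y l1 -> S1 y) -> (forall y, List.In y l2 -> S2 y) ->
  spc_covered_by (l1 ++ l2) -> Vset S1 p -> ~ sub_incl (spc_kernel (Vset S2)) (sval p).
Proof.
move=> l1S1 l2S2 cover S1p S2p; apply: (@principal_prod_not_sub p l1).
- by move=> y /l1S1; apply: S1p.
- by move=> X /(principal_prod_sub_kernel l2S2 cover); apply: S2p.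
Qed.

Lemma spc_covered_by_catC l1 l2 : spc_covered_by (l1 ++ l2) -> spc_covered_by (l2 ++ l1).
Proof.
move=> cover q; have [y yl qy] := cover q.
by exists y => //; apply: List.in_or_app; case: (List.in_app_or _ _ _ yl); [right | left].
Qed.

Lemma kernels_splitting S1 S2 l1 l2 :
  (exists q, ~ Vset S1 q) -> (exists q, ~ Vset S2 q) -> (forall q, Vset S1 q \/ Vset S2 q) ->
  (forall y, List.In y l1 -> S1 y) -> (forall y, List.In y l2 -> S2 y) ->
  spc_covered_by (l1 ++ l2) ->
  splitting_ideals (spc_kernel (Vset S1)) (spc_kernel (Vset S2)).
Proof.
move=> [q1 nq1] [q2 nq2] V12 l1S1 l2S2 cover; split.
- by split; apply: thick_ideal_kernel.
- by apply: (kernel_proper (q := q2)); case: (V12 q2).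
- by apply: (kernel_proper (q := q1)); case: (V12 q1).
- move=> X; apply: NNPP => nX.
  have [P [pP IJP]] := prime_exists (thick_ideal_gen _) (ex_intro _ X nX).
  have [Vp|Vp] := V12 (exist _ P pP).
  + apply: (kernel_not_sub l1S1 l2S2 cover Vp) => Y JY.
    by apply: IJP; apply: gen_ideal_sub; right.
  + apply: (kernel_not_sub l2S2 l1S1 (spc_covered_by_catC cover) Vp) => Y IY.
    by apply: IJP; apply: gen_ideal_sub; left.
- by move=> X [IX JX] P pP; case: (V12 (exist _ P pP)); [apply: IX | apply: JX].
Qed.

Lemma quasi_compact_disconnected_splitting :
  spc_quasi_compact -> spc_disconnected K -> exists I J : subcat K, splitting_ideals I J.
Proof.
move=> qc /spc_disconnectedP [S1 [S2 [n1 n2 V12disj V12]]].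
have [q|l [lS lcover]] := qc (fun y => S1 y \/ S2 y).
  apply: NNPP => nq; apply: (V12disj q); split=> A SA qA; apply: nq; exists A => //.
  - by left.
  - by right.
have [l1 [l2 [l1S1 l2S2 l12]]] := list_partition lS.
exists (spc_kernel (Vset S1)), (spc_kernel (Vset S2)).
apply: kernels_splitting n1 n2 V12 l1S1 l2S2 _ => q.
by have [y /l12 yl qy] := lcover q; exists y => //; apply: List.in_or_app.
Qed.

(* Failing a finite subcover, extending a list by an object of S in a prime that the list
   misses produces a strictly descending chain of closed sets. *)
Lemma noetherian_quasi_compact : spc_noetherian K -> spc_quasi_compact.
Proof.
move=> noeth S cover; apply: NNPP => nfin.
have step l : exists y, (forall z, List.In z l -> S z) ->
    S y /\ exists2 q : Spc K, Vset (fun z => List.In z l) q & sval q y.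
  have [lS|] := classic (forall z, List.In z l -> S z); last by exists tunit.
  have [q lq] : exists q : Spc K, Vset (fun z => List.In z l) q.
    apply: NNPP => nq; apply: nfin; exists l; split=> // q.
    by apply: NNPP => nlq; apply: nq; exists q => y yl qy; apply: nlq; exists y.
  by have [y Sy qy] := cover q; exists y => _; split=> //; exists q.
have [next next_spec] := functional_choice _ step.
pose chain n := iter n (fun l => next l :: l) [::].
have chainS n z : List.In z (chain n) -> S z.
  elim: n z => [|n IHn] z //= [<-|]; last exact: IHn.
  exact: (next_spec _ IHn).1.
have [|n q|N stable] := noeth (fun n => Vset (fun z => List.In z (chain n))).
- by move=> n; exists (fun z => List.In z (chain n)).
- by move=> qn y yn; apply: qn; right.
have [_ [q qN qnext]] := next_spec _ (chainS N).
by apply: (proj2 (stable N.+1 (leqnSn N) q) qN (next (chain N))) => //; left.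
Qed.

Lemma tens_generator_incl (G : K) s t (Q : subcat K) : thick_generated_by G ->
  thick_ideal Q -> Q (tens s (tens G t)) -> tens_incl (principal s) (principal t) Q.
Proof.
move=> genG tQ sGtQ.
have sCtQ C : Q (tens s (tens C t)).
  apply: (genG (fun C => Q (tens s (tens C t))) _ sGtQ C).
  exact: thick_sub_preim_tensl (thick_sub_preim_tensr s (ideal_thick tQ)).
pose Bt Y := exists C, isomorphic (tens C t) Y.
have Bt_tens C Y : Bt Y -> Bt (tens C Y).
  move=> [C' C't]; exists (tens C C').
  exact: isomorphic_trans (isomorphic_assoc C C' t) (tens_isomorphic (isomorphic_refl C) C't).
have sBtQ : tens_incl (eq^~ s) Bt Q.
  move=> _ Y -> [C CtY].
  exact: ideal_iso tQ (tens_isomorphic (isomorphic_refl s) CtY) (sCtQ C).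
move=> X Y sX tY; apply: (tens_incl_gen tQ Bt_tens sBtQ sX).
by apply: (gen_ideal_mono _ tY) => _ ->; exists tunit; apply: isomorphic_lunit.
Qed.

Definition finitely_covered S s := exists l, (forall y, List.In y l -> S y) /\
  forall q : Spc K, sval q s -> exists2 y, List.In y l & sval q y.

Lemma finitely_covered_m_system (G : K) S :
  thick_generated_by G -> m_system (finitely_covered S).
Proof.
move=> genG s t [ls [lsS ls_cov]] [lt [ltS lt_cov]].
exists (tens s (tens G t)).
  exists (ls ++ lt); split=> [y yl | q q_sGt].
    by case: (List.in_app_or _ _ _ yl); [apply: lsS | apply: ltS].
  have tq := prime_thick_ideal (proj2_sig q).
  have [qs|qt] := prime_principal (proj2_sig q)
    (ideal_prod_min tq (tens_generator_incl genG tq q_sGt)).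
  - by have [y yl qy] := ls_cov q qs; exists y => //; apply: List.in_or_app; left.
  - by have [y yl qy] := lt_cov q qt; exists y => //; apply: List.in_or_app; right.
apply: ideal_prod_tens; first exact: principal_self.
exact: ideal_tensr (thick_ideal_gen _) (principal_self (A := t)).
Qed.

Lemma thick_generated_quasi_compact (G : K) : thick_generated_by G -> spc_quasi_compact.
Proof.
move=> genG S cover; pose Z := gen_ideal (fun _ : K => False).
have [[s [l [lS l_cov]] Zs]|noZ] := classic (exists2 s, finitely_covered S s & Z s).
  exists l; split=> // q; apply: l_cov.
  exact: gen_ideal_min (prime_thick_ideal (proj2_sig q)) _ _ Zs.
have [||P [pP _ P_cov]] :=
  prime_avoiding (thick_ideal_gen (fun _ : K => False)) (finitely_covered_m_system (S := S) genG).
- exists tunit, [::]; split=> // q q1.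
  by case: (prime_no_unit (proj2_sig q) q1).
- by move=> s Ss Zs; apply: noZ; exists s.
have [y Sy Py] := cover (exist _ P pP).
by case: (P_cov y _ Py); exists [:: y]; split=> [z [<-|] | q qy] //; exists y => //; left.
Qed.

End Spectrum.

Theorem theoremB (K : MDC) :
  let cond_a := exists I J : subcat K,
      [/\ thick_ideal I /\ thick_ideal J, proper_id I, proper_id J, coprime_id I J
        & complementary I J] in
  let cond_b := exists A B : K,
      [/\ proper_id (principal A), proper_id (principal B),
          coprime_id (principal A) (principal B)
        & complementary (principal A) (principal B)] in
  let cond_c := spc_disconnected K in
  [/\ cond_a <-> cond_b,
      cond_a -> cond_c
    & ((exists G : K, thick_generated_by G) \/ spc_noetherian K) ->
      cond_c -> cond_a].
Proof.
cbv zeta; split.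
- split=> [[I [J /splitting_ideals_objects]] // | [A [B /splitting_objects_ideals AB]]].
  by exists (principal A), (principal B).
- by move=> [I [J /splitting_ideals_objects [A [B /splitting_objects_disconnected]]]].
- move=> [[G genG] | noeth]; apply: quasi_compact_disconnected_splitting.
  + exact: thick_generated_quasi_compact genG.
  + exact: noetherian_quasi_compact.
Qed.
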